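(* Fix integers $1\le i<s\le t\le r$. For $m\ge1$ let $M(m)$ be the maximum of $k^t(\mathcal H)$ over all $s$-graphs $\mathcal H$ with $m$ edges and $\Delta_i(\mathcal H)\le\binom{r-i}{s-i}$. Then \[M(m)=(1-o(1))\,m\frac{\binom{r}{t}}{\binom{r}{s}}\quad\text{as } m\to\infty.\]
   Context: An $s$-graph is a family of $s$-subsets (edges) of a vertex set. For $|I|=i$, $d_{\mathcal H}(I)$ is the number of edges containing $I$ and $\Delta_i(\mathcal H)=\max_{|I|=i}d_{\mathcal H}(I)$. $k^t(\mathcal H)$ is the number of $t$-sets all of whose $s$-subsets are edges. *)

From mathcomp Require Import all_boot all_order all_algebra.
Set Implicit Arguments. Unset Strict Implicit. Unset Printing Implicit Defensive.
Import Order.TTheory GRing.Theory Num.Theory.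

Section Hypergraphs.
Variable V : finType.

Definition is_sgraph (s : nat) (H : {set {set V}}) : Prop :=
  forall e, e \in H -> #|e| = s.

Definition hdeg (H : {set {set V}}) (I : {set V}) : nat :=
  #|[set e in H | I \subset e]|.

Definition Delta (i : nat) (H : {set {set V}}) : nat :=
  \max_(I : {set V} | #|I| == i) hdeg H I.

Definition kt (s t : nat) (H : {set {set V}}) : nat :=
  #|[set T : {set V} | (#|T| == t) &&
      [forall S : {set V}, ((S \subset T) && (#|S| == s)) ==> (S \in H)]]|.
End Hypergraphs.

From mathcomp Require Import all_boot all_order all_algebra.
Import Order.TTheory GRing.Theory Num.Theory.
From mathcomp Require Import ring lra zify.
Set Implicit Arguments. Unset Strict Implicit. Unset Printing Implicit Defensive.

(* Upper bound: a c-uniform family G with |G| <= C(n, c) has at most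
   |G| (n - c) / (c + 1) cliques of size c + 1 (a Lovasz-type form of
   Kruskal-Katona, by induction on n: either some vertex has degree above
   C(n - 1, c - 1) and is deleted, or all links are small and the bound is
   summed over vertices).  Iterating, G has at most |G| C(n, b) / C(n, a)
   b-cliques.  For an s-graph H with Delta_i(H) <= C(r - i, s - i), apply this
   with n = r - i to the link of every i-set I and double count over I:
   k^t(H) <= m C(r, t) / C(r, s).
   Lower bound: floor(m / C(r, s)) disjoint complete s-graphs on r vertices,
   plus the remaining edges in further disjoint blocks, satisfy the degree
   condition and contain floor(m / C(r, s)) C(r, t) t-cliques. *)

Lemma leq_card_inj (T T' : finType) (A : {set T}) (D : {set T'}) (f : T -> T') :
  {in A &, injective f} -> (forall x, x \in A -> f x \in D) -> #|A| <= #|D|.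
Proof.
move=> f_inj fAD; rewrite -(card_in_imset f_inj); apply: subset_leq_card.
by apply/subsetP=> _ /imsetP[x xA ->]; apply: fAD.
Qed.

Lemma setD_inj (T : finType) (I e1 e2 : {set T}) :
  I \subset e1 -> I \subset e2 -> e1 :\: I = e2 :\: I -> e1 = e2.
Proof.
by move=> s1 s2 eD; rewrite -(setID e1 I) -(setID e2 I) eD (setIidPr s1) (setIidPr s2).
Qed.

Lemma setUDK_disjoint (T : finType) (X I : {set T}) : [disjoint X & I] -> (X :|: I) :\: I = X.
Proof. by move=> dXI; rewrite setDUl setDv setU0; apply/setDidPl. Qed.

Lemma sum_card_rel (T U : finType) (P : pred T) (F : {set U}) (R : T -> U -> bool) :
  \sum_(x | P x) #|[set B in F | R x B]| = \sum_(B in F) #|[set x | P x & R x B]|.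
Proof.
under eq_bigr do rewrite -sum1dep_card.
rewrite (exchange_big_dep (mem F)) /=; last by move=> x B _ /andP[].
apply: eq_bigr => B BF; rewrite -sum1dep_card; apply: eq_bigl => x.
by rewrite BF.
Qed.

Lemma mul_bin_bin r s i : i <= s -> s <= r ->
  'C(r, s) * 'C(s, i) = 'C(r, i) * 'C(r - i, s - i).
Proof.
move=> le_is le_sr; have le_ir := leq_trans le_is le_sr.
have fact_gt0 : 0 < i`! * (s - i)`! * (r - s)`! by rewrite !muln_gt0 !fact_gt0.
apply/eqP; rewrite -(eqn_pmul2r fact_gt0); apply/eqP.
have e : r - i - (s - i) = r - s by lia.
have := @bin_fact (r - i) (s - i) (leq_sub2r _ le_sr); rewrite e => f_ri.
transitivity ('C(r, s) * ('C(s, i) * (i`! * (s - i)`!)) * (r - s)`!); first ring.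
rewrite (bin_fact le_is) -mulnA (bin_fact le_sr).
transitivity ('C(r, i) * (i`! * ('C(r - i, s - i) * ((s - i)`! * (r - s)`!)))); last ring.
by rewrite f_ri bin_fact.
Qed.

Section Cliques.
Variable V : finType.
Implicit Types (G F : {set {set V}}) (B I S X : {set V}) (v : V).

Definition cliques c k G : {set {set V}} :=
  [set B : {set V} | (#|B| == k) &&
      [forall S : {set V}, ((S \subset B) && (#|S| == c)) ==> (S \in G)]].

Lemma kt_cliques s t G : kt s t G = #|cliques s t G|.
Proof. by []. Qed.

Lemma cliquesP c k G B :
  reflect (#|B| = k /\ forall S, S \subset B -> #|S| = c -> S \in G)
          (B \in cliques c k G).
Proof.
rewrite inE; apply: (iffP andP) => [[/eqP -> /forallP cl]|[-> cl]]; split=> //.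
  by move=> S sSB cS; have := cl S; rewrite sSB cS eqxx.
by apply/forallP=> S; apply/implyP=> /andP[sSB /eqP cS]; apply: cl.
Qed.

Lemma cliques_sgraph c k G : is_sgraph k (cliques c k G).
Proof. by move=> B /cliquesP[]. Qed.

Lemma cliques_cliques a b k G : cliques a k G \subset cliques b k (cliques a b G).
Proof.
apply/subsetP=> B /cliquesP[cB cl]; apply/cliquesP; split=> // S sSB cS.
by apply/cliquesP; split=> // S' sS'S cS'; apply: cl (subset_trans sS'S sSB) cS'.
Qed.

Lemma cliquesS_set0 c : cliques c c.+1 set0 = set0.
Proof.
apply/setP=> B; rewrite in_set0; apply/negP=> /cliquesP[cB cl].
have /set0Pn[x xB] : B != set0 by rewrite -card_gt0 cB.
have cBx : #|B :\ x| = c by move: cB; rewrite (cardsD1 x) xB => -[].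
by have := cl _ (subD1set B x) cBx; rewrite inE.
Qed.

Lemma sum_hdeg j k F : is_sgraph k F ->
  \sum_(I : {set V} | #|I| == j) hdeg F I = 'C(k, j) * #|F|.
Proof.
move=> Fk; rewrite /hdeg sum_card_rel [RHS]mulnC -sum_nat_const.
by apply: eq_bigr => B BF; rewrite -(Fk B BF) -cards_draws; apply: eq_card => I; rewrite !inE andbC.
Qed.

Lemma sum_hdeg1 k F : is_sgraph k F -> \sum_v hdeg F [set v] = k * #|F|.
Proof.
move=> Fk; under eq_bigr do rewrite /hdeg; rewrite sum_card_rel [RHS]mulnC -sum_nat_const.
by apply: eq_bigr => B BF; rewrite -(Fk B BF); apply: eq_card => x; rewrite !inE sub1set.
Qed.

Definition link I G := [set X : {set V} | [disjoint X & I] && (X :|: I \in G)].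

Definition avoid v G := [set e in G | v \notin e].

Lemma link_sgraph c I G : is_sgraph c G -> is_sgraph (c - #|I|) (link I G).
Proof.
move=> Gc X; rewrite inE => /andP[dXI /Gc].
by rewrite cardsU (disjoint_setI0 dXI) cards0 subn0 => <-; rewrite addnK.
Qed.

Lemma card_link I G : #|link I G| = hdeg G I.
Proof.
apply/eqP; rewrite eqn_leq; apply/andP; split.
  apply: (leq_card_inj (f := fun X => X :|: I)).
    move=> X1 X2; rewrite !inE => /andP[d1 _] /andP[d2 _] /= eX.
    by rewrite -(setUDK_disjoint d1) -(setUDK_disjoint d2) eX.
  by move=> X; rewrite !inE => /andP[_ ->]; rewrite subsetUr.
apply: (leq_card_inj (f := fun e => e :\: I)).
  by move=> e1 e2; rewrite !inE => /andP[_ s1] /andP[_ s2]; apply: setD_inj.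
move=> e; rewrite !inE => /andP[eG sIe].
have -> : (e :\: I) :|: I = e by rewrite setUC -{2}(setID e I) (setIidPr sIe).
by rewrite eG andbT; apply/setDidPl; rewrite setDDl setUid.
Qed.

Lemma hdeg_cliques_link c k I G : #|I| <= c ->
  hdeg (cliques c k G) I <= #|cliques (c - #|I|) (k - #|I|) (link I G)|.
Proof.
move=> le_Ic; apply: (leq_card_inj (f := fun T => T :\: I)).
  by move=> T1 T2; rewrite !inE => /andP[_ s1] /andP[_ s2]; apply: setD_inj.
move=> T; rewrite inE => /andP[/cliquesP[cT cl] sIT]; apply/cliquesP; split.
  by rewrite cardsDS // cT.
move=> S; rewrite subsetD => /andP[sST dSI] cS; rewrite inE dSI /=.
apply: cl; first by rewrite subUset sST.
by rewrite cardsU (disjoint_setI0 dSI) cards0 subn0 cS subnK.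
Qed.

Lemma card_avoid v G : #|G| = #|avoid v G| + hdeg G [set v].
Proof.
rewrite -(cardsID [set e : {set V} | v \in e] G) addnC; congr (_ + _); apply: eq_card => e.
  by rewrite !inE andbC.
by rewrite !inE sub1set.
Qed.

Lemma avoid_sgraph c v G : is_sgraph c G -> is_sgraph c (avoid v G).
Proof. by move=> Gc e; rewrite inE => /andP[/Gc]. Qed.

Lemma card_cliques_avoid c k v G :
  #|cliques c k G| <= #|cliques c k (avoid v G)| + hdeg (cliques c k G) [set v].
Proof.
rewrite (card_avoid v (cliques c k G)) leq_add2r; apply: subset_leq_card.
apply/subsetP=> B; rewrite inE => /andP[/cliquesP[cB cl] vB]; apply/cliquesP.
split=> // S sSB cS; rewrite inE cl //; apply: contra vB; exact: (subsetP sSB).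
Qed.

Lemma hdeg_cliquesS_avoid c v G : hdeg (cliques c c.+1 G) [set v] <= #|avoid v G|.
Proof.
apply: (leq_card_inj (f := fun B => B :\ v)).
  by move=> B1 B2; rewrite !inE => /andP[_ s1] /andP[_ s2]; apply: setD_inj.
move=> B; rewrite inE sub1set => /andP[/cliquesP[cB cl] vB]; rewrite !inE eqxx andbT.
by apply: cl; [exact: subD1set | move: cB; rewrite (cardsD1 v) vB => -[]].
Qed.

Lemma cliques12_bound n G : is_sgraph 1 G -> #|G| <= n ->
  2 * #|cliques 1 2 G| <= #|G| * (n - 1).
Proof.
move=> G1 le_Gn; pose U := [set x | [set x] \in G].
have GU : G = [set [set x] | x in U].
  apply/setP=> e; apply/idP/imsetP => [eG|[x]]; last by rewrite inE => xG ->.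
  by have [x ex] := cards1P (introT eqP (G1 e eG)); exists x; rewrite // inE -ex.
have cGU : #|G| = #|U| by rewrite GU card_imset //; apply: set1_inj.
have sub : cliques 1 2 G \subset [set A : {set V} | A \subset U & #|A| == 2].
  apply/subsetP=> B /cliquesP[cB cl]; rewrite inE cB eqxx andbT.
  by apply/subsetP=> x xB; rewrite inE; apply: cl; rewrite ?sub1set ?cards1.
have := subset_leq_card sub; rewrite cards_draws -cGU -(leq_pmul2l (ltn0Sn 1)).
move/leq_trans; apply; rewrite -mul_bin_diag bin1 subn1 /= leq_mul2l.
by rewrite -!subn1 leq_sub2r ?orbT.
Qed.

Section CliquesSBoundStep.
Variable n : nat.
Hypothesis cliquesS_bound_n : forall c G, 0 < c -> is_sgraph c G -> #|G| <= 'C(n, c) ->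
  c.+1 * #|cliques c c.+1 G| <= #|G| * (n - c).

Lemma cliquesS_bound_heavy c v G : is_sgraph c.+1 G -> #|G| <= 'C(n.+1, c.+1) ->
  'C(n, c) < hdeg G [set v] -> c.+2 * #|cliques c.+1 c.+2 G| <= #|G| * (n.+1 - c.+1).
Proof.
move=> Gc le_G heavy; rewrite subSS (card_avoid v G).
have lt_g : #|avoid v G| < 'C(n, c.+1) by move: le_G; rewrite binS (card_avoid v G); lia.
have le_cn : c < n by rewrite -bin_gt0; lia.
have IHv := cliquesS_bound_n (ltn0Sn c) (avoid_sgraph (v := v) Gc) (ltnW lt_g).
have K_avoid := card_cliques_avoid c.+1 c.+2 v G.
have K_star := hdeg_cliquesS_avoid c.+1 v G.
have g_d : c.+1 * #|avoid v G| <= (n - c) * hdeg G [set v].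
  apply: leq_trans (leq_mul (leqnn c.+1) (ltnW lt_g)) _.
  by rewrite mul_bin_left leq_mul2l ltnW ?orbT.
nia.
Qed.

Lemma cliquesS_bound_light c G : is_sgraph c.+2 G ->
  (forall v, hdeg G [set v] <= 'C(n, c.+1)) ->
  c.+3 * #|cliques c.+2 c.+3 G| <= #|G| * (n.+1 - c.+2).
Proof.
move=> Gc light; rewrite subSS.
have star_bound v : c.+2 * hdeg (cliques c.+2 c.+3 G) [set v] <= hdeg G [set v] * (n - c.+1).
  have link_v := link_sgraph (I := [set v]) Gc; rewrite cards1 subSS subn0 in link_v.
  have star_link := @hdeg_cliques_link c.+2 c.+3 [set v] G.
  rewrite cards1 !subSS !subn0 in star_link.
  apply: leq_trans (leq_mul (leqnn _) (star_link isT)) _.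
  by rewrite -card_link; apply: cliquesS_bound_n; rewrite ?card_link.
have := leq_sum (index_enum _) (fun v (_ : true) => star_bound v).
rewrite -big_distrr -big_distrl /= (sum_hdeg1 (@cliques_sgraph _ _ G)) (sum_hdeg1 Gc).
by rewrite -mulnA leq_pmul2l.
Qed.
End CliquesSBoundStep.

Lemma cliquesS_bound n c G : 0 < c -> is_sgraph c G -> #|G| <= 'C(n, c) ->
  c.+1 * #|cliques c c.+1 G| <= #|G| * (n - c).
Proof.
elim: n c G => [|n IH] c G c_gt0 Gc le_G.
  move: le_G; rewrite bin0n gtn_eqF // leqn0 cards_eq0 => /eqP ->.
  by rewrite cliquesS_set0 cards0 muln0 leq0n.
case: c c_gt0 Gc le_G => [//|[|c]] _ Gc le_G; first by apply: cliques12_bound; rewrite bin1 in le_G.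
have [v heavy|light] := pickP (fun v => 'C(n, c.+1) < hdeg G [set v]).
  exact: cliquesS_bound_heavy heavy.
by apply: cliquesS_bound_light => // v; rewrite leqNgt light.
Qed.

Lemma cliques_bound n a b G : 0 < a -> a <= b -> is_sgraph a G -> #|G| <= 'C(n, a) ->
  #|cliques a b G| * 'C(n, a) <= #|G| * 'C(n, b).
Proof.
move=> a_gt0 le_ab Ga le_G; rewrite -(subnKC le_ab); elim: (b - a) => [|k IH].
  rewrite addn0 leq_mul2r; apply/orP; right; apply: subset_leq_card.
  by apply/subsetP=> B /cliquesP[cB cl]; apply: cl.
have [->|Ca_gt0] := posnP 'C(n, a); first by rewrite muln0.
rewrite addnS; move: IH; set c := a + k => IH.
have le_Kc : #|cliques a c G| <= 'C(n, c).
  by rewrite -(leq_pmul2r Ca_gt0); apply: (leq_trans IH); rewrite mulnC leq_mul2l le_G orbT.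
have KS := cliquesS_bound (leq_trans a_gt0 (leq_addr _ _)) (@cliques_sgraph a c G) le_Kc.
have sub := subset_leq_card (cliques_cliques a c c.+1 G).
rewrite -/c in KS; rewrite -(leq_pmul2l (ltn0Sn c)).
apply: (@leq_trans ((n - c) * #|cliques a c G| * 'C(n, a))).
  rewrite mulnA leq_mul2r (mulnC (n - c)); apply/orP; right.
  by apply: leq_trans KS; rewrite leq_mul2l sub orbT.
by rewrite [leqRHS]mulnCA mul_bin_left [leqRHS]mulnCA -mulnA leq_mul2l IH orbT.
Qed.

Lemma hdeg_cliques_bound n s t I G : #|I| < s -> s <= t -> is_sgraph s G ->
  hdeg G I <= 'C(n, s - #|I|) ->
  hdeg (cliques s t G) I * 'C(n, s - #|I|) <= hdeg G I * 'C(n, t - #|I|).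
Proof.
move=> lt_Is le_st Gs le_deg.
apply: leq_trans (leq_mul (hdeg_cliques_link t G (ltnW lt_Is)) (leqnn _)) _.
rewrite -card_link; apply: cliques_bound; rewrite ?subn_gt0 ?leq_sub2r ?card_link //.
exact: link_sgraph.
Qed.

End Cliques.

Lemma kt_upper_bound (V : finType) (H : {set {set V}}) i s t r :
  i < s -> s <= t -> t <= r -> is_sgraph s H -> Delta i H <= 'C(r - i, s - i) ->
  kt s t H * 'C(r, s) <= #|H| * 'C(r, t).
Proof.
move=> lt_is le_st le_tr Hs le_Delta.
have le_is := ltnW lt_is; have le_it := leq_trans le_is le_st.
have local (I : {set V}) : #|I| == i ->
    hdeg (cliques s t H) I * 'C(r - i, s - i) <= hdeg H I * 'C(r - i, t - i).
  move=> /eqP cI; rewrite -cI; apply: hdeg_cliques_bound; rewrite ?cI //.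
  by apply: leq_trans le_Delta; apply: (leq_bigmax_cond (F := hdeg H)); rewrite cI.
have := leq_sum (index_enum _) local; rewrite -!big_distrl /=.
rewrite (sum_hdeg i (@cliques_sgraph _ s t H)) (sum_hdeg i Hs) -kt_cliques.
set K := kt s t H; set m := #|H| => le_sums.
have Csi_Cti_gt0 : 0 < 'C(s, i) * 'C(t, i) by rewrite muln_gt0 !bin_gt0 le_is le_it.
rewrite -(leq_pmul2r Csi_Cti_gt0).
have -> : K * 'C(r, s) * ('C(s, i) * 'C(t, i)) = 'C(t, i) * K * ('C(r, s) * 'C(s, i)) by ring.
have -> : m * 'C(r, t) * ('C(s, i) * 'C(t, i)) = 'C(s, i) * m * ('C(r, t) * 'C(t, i)) by ring.
rewrite !mul_bin_bin ?(leq_trans le_st) // !mulnA -!(mulnC 'C(r, i)) -!mulnA leq_mul2l.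
by rewrite !mulnA le_sums orbT.
Qed.

Lemma card_sets_between (T : finType) (I B : {set T}) s : I \subset B ->
  #|[set e : {set T} | (I \subset e) && (e \subset B) && (#|e| == s)]|
    <= 'C(#|B| - #|I|, s - #|I|).
Proof.
move=> sIB; rewrite -(cardsDS sIB) -cards_draws.
apply: (leq_card_inj (f := fun e => e :\: I)).
  by move=> e1 e2; rewrite !inE => /andP[/andP[s1 _] _] /andP[/andP[s2 _] _]; apply: setD_inj.
move=> e; rewrite !inE => /andP[/andP[sIe seB] /eqP <-].
by rewrite setSD //= cardsDS.
Qed.

Section DisjointCliques.
Variables q rem r : nat.
Local Notation V := ('I_(q + rem) * 'I_r)%type.

Definition block_set (j : 'I_(q + rem)) (A : {set 'I_r}) : {set V} := [set (j, x) | x in A].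

Lemma mem_block_set j A y : (y \in block_set j A) = (y.1 == j) && (y.2 \in A).
Proof.
apply/imsetP/andP => [[x xA ->]|[/eqP <- yA]]; first by rewrite eqxx.
by exists y.2; last case: y {yA}.
Qed.

Lemma card_block_set j A : #|block_set j A| = #|A|.
Proof. by rewrite card_imset // => x y []. Qed.

Lemma block_set_inj j j' A A' : A != set0 -> block_set j A = block_set j' A' -> j = j' /\ A = A'.
Proof.
move=> /set0Pn[x xA] eB.
have : (j, x) \in block_set j' A' by rewrite -eB mem_block_set eqxx.
rewrite mem_block_set /= => /andP[/eqP jj' _]; split=> //; subst j'.
apply/setP=> y; have := congr1 (fun B : {set V} => (j, y) \in B) eB.
by rewrite /= !mem_block_set eqxx.
Qed.

Definition full_blocks k := [set block_set (lshift rem p.1) p.2 |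
   p in [set p : 'I_q * {set 'I_r} | #|p.2| == k]].

Lemma card_full_blocks k : 0 < k -> #|full_blocks k| = q * 'C(r, k).
Proof.
move=> k_gt0; rewrite card_in_imset.
  rewrite (_ : [set p | _] = setX [set: 'I_q] [set A : {set 'I_r} | #|A| == k]).
    by rewrite cardsX cardsT card_ord card_draws card_ord.
  by apply/setP=> -[j A]; rewrite !inE.
move=> [j A] [j' A']; rewrite !inE /= => /eqP cA _ /block_set_inj[].
  by rewrite -card_gt0 cA.
by move/lshift_inj => -> ->.
Qed.

Variables (s : nat) (A0 : {set 'I_r}).

(* Block j < q carries all s-subsets of {j} x 'I_r; each of the rem blocks
   above q carries the single edge {j} x A0. *)
Definition padded_blocks :=
  full_blocks s :|: [set block_set (rshift q k) A0 | k in [set: 'I_rem]].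

Hypotheses (s_gt0 : 0 < s) (cA0 : #|A0| = s).

Lemma padded_blocksP e : e \in padded_blocks ->
  exists j A, e = block_set j A /\ #|A| = s.
Proof.
rewrite inE => /orP[/imsetP[[j A] /=]|/imsetP[k _ ->]]; last by exists (rshift q k), A0.
by rewrite inE /= => /eqP cA ->; exists (lshift rem j), A.
Qed.

Lemma padded_blocks_sgraph : is_sgraph s padded_blocks.
Proof. by move=> e /padded_blocksP[j [A [-> <-]]]; rewrite card_block_set. Qed.

Lemma card_padded_blocks : #|padded_blocks| = q * 'C(r, s) + rem.
Proof.
have A0_neq0 : A0 != set0 by rewrite -card_gt0 cA0.
rewrite cardsU card_full_blocks // card_imset ?cardsT ?card_ord; last first.
  by move=> k k' /block_set_inj[] // /rshift_inj.
suff -> : full_blocks s :&: [set block_set (rshift q k) A0 | k in [set: 'I_rem]] = set0.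
  by rewrite cards0 subn0.
apply/setP=> e; rewrite !inE; apply/negP=> /andP[/imsetP[[j A] _ ->] /imsetP[k _ eB]].
have [x xA0] := set0Pn _ A0_neq0.
have : (rshift q k, x) \in block_set (lshift rem j) A by rewrite eB mem_block_set eqxx.
by rewrite mem_block_set /= eq_rlshift.
Qed.

Lemma Delta_padded_blocks i : 0 < i -> Delta i padded_blocks <= 'C(r - i, s - i).
Proof.
move=> i_gt0; apply/bigmax_leqP => I /eqP cI.
have [x0 x0I] : exists x0, x0 \in I by apply/set0Pn; rewrite -card_gt0 cI.
pose B := block_set x0.1 setT.
have sub : [set e in padded_blocks | I \subset e] \subset
           [set e : {set V} | (I \subset e) && (e \subset B) && (#|e| == s)].
  apply/subsetP=> e; rewrite inE => /andP[eH sIe]; rewrite inE sIe /=.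
  have [j [A [eE cA]]] := padded_blocksP eH; subst e.
  rewrite card_block_set cA eqxx andbT.
  have := subsetP sIe x0 x0I; rewrite mem_block_set => /andP[/eqP <- _].
  by apply/subsetP=> y; rewrite !mem_block_set => /andP[-> _]; rewrite in_setT.
rewrite /hdeg; apply: leq_trans (subset_leq_card sub) _.
have [sIB|nsIB] := boolP (I \subset B).
  by apply: leq_trans (card_sets_between s sIB) _; rewrite card_block_set cardsT card_ord cI.
rewrite (_ : [set e | _] = set0) ?cards0 //; apply/setP=> e; rewrite !inE.
by apply/negP=> /andP[/andP[sIe seB] _]; move: nsIB; rewrite (subset_trans sIe seB).
Qed.

Lemma kt_padded_blocks t : s <= t -> q * 'C(r, t) <= kt s t padded_blocks.
Proof.
move=> le_st; rewrite -card_full_blocks ?(leq_trans s_gt0) // kt_cliques.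
apply: subset_leq_card; apply/subsetP=> T /imsetP[[j A]]; rewrite inE /= => /eqP cA ->.
apply/cliquesP; split; first by rewrite card_block_set.
move=> S sS cS; rewrite inE; apply/orP; left.
pose A' := [set x | (lshift rem j, x) \in S].
have eS : S = block_set (lshift rem j) A'.
  apply/setP=> y; rewrite mem_block_set inE; apply/idP/idP => [yS|/andP[/eqP <- yA']].
    have := subsetP sS y yS; rewrite mem_block_set => /andP[/eqP <- _].
    by case: y yS => a b /= ->; rewrite eqxx.
  by case: y yA'.
apply/imsetP; exists (j, A') => //=.
by rewrite inE /= -(card_block_set (lshift rem j)) -eS cS.
Qed.

End DisjointCliques.

Local Open Scope ring_scope.

Lemma divn_mul_ge_eventually (R : archiRealFieldType) (c : nat) (eps : R) :
  (0 < c)%N -> 0 < eps ->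
  exists m0, forall m, (m0 <= m)%N -> (1 - eps) * m%:R <= (m %/ c * c)%:R.
Proof.
move=> c_gt0 eps_gt0; pose N := Num.Def.archi_bound eps^-1.
have epsN : 1 < eps * N%:R.
  have := @archi_boundP _ eps^-1; rewrite invr_ge0 ltW // => /(_ isT).
  by move=> lt_invN; rewrite -(ltr_pM2l eps_gt0) mulfV ?gt_eqF in lt_invN.
exists (N * c)%N => m le_Ncm.
have c_lt : c%:R < eps * m%:R.
  have := ler_nat R (N * c) m; rewrite le_Ncm natrM => /(ler_wpM2l (ltW eps_gt0)).
  by apply: lt_le_trans; rewrite mulrA ltr_pMl // ltr0n.
have m_mod : m%:R = (m %/ c * c)%:R + (m %% c)%:R :> R by rewrite -natrD -divn_eq.
have mod_lt : (m %% c)%:R < c%:R :> R by rewrite ltr_nat ltn_mod.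
lra.
Qed.

Unset Implicit Arguments.

Theorem mainTheorem18 (i s t r : nat) :
  (1 <= i)%N -> (i < s)%N -> (s <= t)%N -> (t <= r)%N ->
  forall eps : rat, 0 < eps ->
  exists m0 : nat, forall m : nat, (m0 <= m)%N -> (1 <= m)%N ->
    (forall (V : finType) (H : {set {set V}}),
        is_sgraph s H -> #|H| = m -> (Delta i H <= 'C(r - i, s - i))%N ->
        (kt s t H)%:R <= (1 + eps) * m%:R * 'C(r, t)%:R / 'C(r, s)%:R)
    /\
    (exists (V : finType) (H : {set {set V}}),
        [/\ is_sgraph s H, #|H| = m, (Delta i H <= 'C(r - i, s - i))%N &
        (1 - eps) * m%:R * 'C(r, t)%:R / 'C(r, s)%:R <= (kt s t H)%:R]).
Proof.
move=> i_gt0 lt_is le_st le_tr eps eps_gt0.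
have le_sr := leq_trans le_st le_tr; have s_gt0 := leq_ltn_trans (leq0n i) lt_is.
have Crs_gt0 : (0 < 'C(r, s))%N by rewrite bin_gt0.
have [m0 le_divn] := divn_mul_ge_eventually Crs_gt0 eps_gt0.
exists m0 => m le_m0m _; split.
  move=> V H Hs cH le_Delta; rewrite ler_pdivlMr ?ltr0n // -natrM.
  apply: le_trans (_ : (m * 'C(r, t))%:R <= _); first by rewrite ler_nat -cH (kt_upper_bound lt_is).
  by rewrite natrM ler_wpM2r ?ler0n // mulrDl mul1r lerDl mulr_ge0 ?ler0n ?ltW.
pose A0 := [set widen_ord le_sr x | x : 'I_s].
have cA0 : #|A0| = s by rewrite card_imset ?card_ord // => x y /(congr1 val) /= /val_inj.
pose q := (m %/ 'C(r, s))%N; pose rm := (m %% 'C(r, s))%N.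
exists ('I_(q + rm) * 'I_r)%type, (padded_blocks q rm s A0); split.
- exact: padded_blocks_sgraph.
- by rewrite card_padded_blocks // -divn_eq.
- exact: Delta_padded_blocks.
apply: le_trans (_ : (q * 'C(r, t))%:R <= _); last by rewrite ler_nat kt_padded_blocks.
rewrite ler_pdivrMr ?ltr0n // natrM [leRHS]mulrAC ler_wpM2r // -natrM.
exact: le_divn.
Qed.
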